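(* Let $\mathbb{F}$ be a field and $\mathcal{A}$ a znz-pattern with $m\ge2$ nonzero diagonal entries, such that the digraph $D(\mathcal{A})$ has no $k$-cycles with $2\le k\le m-1$. If $\mathcal{A}$ is potentially nilpotent over $\mathbb{F}$, then $\mathbb{F}$ contains all the $m$-th roots of unity, i.e. $x^m-1$ factors into $m$ linear factors over $\mathbb{F}$.
   Context: A znz-pattern is an $n\times n$ matrix with entries in $\{*,0\}$; a realization over $\mathbb{F}$ is a matrix in $M_n(\mathbb{F})$ whose nonzero entries are exactly at the $*$ positions; $\mathcal{A}$ is potentially nilpotent over $\mathbb{F}$ if some realization is nilpotent. The digraph $D(\mathcal{A})$ has vertex set $\{1,\ldots,n\}$ and an arc $(i,j)$ whenever $\mathcal{A}_{i,j}=*$ (arcs $(i,i)$ are loops). A $k$-cycle is a sequence of $k$ distinct vertices $i_1,\ldots,i_k$ with arcs $(i_1,i_2),\ldots,(i_{k-1},i_k),(i_k,i_1)$. *)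

From HB Require Import structures.
From mathcomp Require Import all_boot all_order all_algebra.
Set Implicit Arguments. Unset Strict Implicit. Unset Printing Implicit Defensive.
Import GRing.Theory.
Local Open Scope ring_scope.

(* A znz-pattern of size n: entry true = "*", false = "0". *)
Definition znz_pattern (n : nat) := 'M[bool]_n.

Definition realization (F : fieldType) (n : nat) (P : znz_pattern n)
  (A : 'M[F]_n) : Prop :=
  forall i j, (A i j != 0) = P i j.

Definition nilpotent_mx (F : fieldType) (n : nat) (A : 'M[F]_n) : Prop :=
  exists k : nat, iter k (mulmx A) 1%:M = 0.

Definition potentially_nilpotent (F : fieldType) (n : nat) (P : znz_pattern n)
  : Prop :=
  exists A : 'M[F]_n, realization P A /\ nilpotent_mx A.

Definition num_nz_diag (n : nat) (P : znz_pattern n) : nat :=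
  #|[pred i : 'I_n | P i i]|.

Definition is_cycle_of (n : nat) (P : znz_pattern n) (c : seq 'I_n) : Prop :=
  match c with
  | [::] => False
  | x :: _ => uniq c /\ path.cycle (fun i j => P i j) c
  end.

Definition has_k_cycle (n : nat) (P : znz_pattern n) (k : nat) : Prop :=
  exists c : seq 'I_n, size c = k /\ is_cycle_of P c.

Set Warnings "-notation-overridden,-ambiguous-paths".
From mathcomp Require Import all_boot all_order all_algebra perm fingroup.
Import GRing.Theory.
Local Open Scope ring_scope.
Set Implicit Arguments. Unset Strict Implicit.

(* Let A be a nilpotent realization of P over F, of size N, and let
   D = {i | P i i} have m elements, m >= 2.
   1. A nilpotent matrix has characteristic polynomial X^N: char_poly A
      divides det (X^k I - A^k) = X^(kN), and a monic divisor of a power of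
      X is a power of X.
   2. In the Leibniz expansion of det (X I - A), a permutation s <> 1 whose
      term is nonzero uses an arc (i, s i) of D(P) at every point it moves,
      so each nontrivial orbit of s is a cycle of D(P) of length >= 2, hence
      >= m; thus s moves at least m points and its term has degree <= N - m.
      So char_poly A = prod_i (X - a_ii) + q with deg q <= N - m.
   3. prod_i (X - a_ii) = Q X^(N-m) with Q = prod_(i in D) (X - a_ii), and
      comparing coefficients with X^N forces Q = X^m + c.
   4. If X^m + c splits with a nonzero root d, then c = -d^m and
      substituting X := d X gives X^m - 1 = prod_(i in D) (X - a_ii / d). *)

Lemma monic_dvd_Xn (F : fieldType) (N : nat) (p : {poly F}) :
  p \is monic -> p %| 'X^N -> p = 'X^((size p).-1).
Proof.
move=> mon_p p_dvd_Xn.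
have /dvdp_exp_XsubCP[k _] : p %| ('X - 0%:P) ^+ N by rewrite subr0.
rewrite subr0 eqp_monic ?monicXn // => /eqP ->.
by rewrite size_polyXn.
Qed.

Lemma char_poly_nilpotent (F : fieldType) (n k : nat) (A : 'M[F]_n.+1) :
  A ^+ k = 0 -> char_poly A = 'X^(n.+1).
Proof.
move=> Ak0; set A' := map_mx (@polyC F) A.
have comm_XA : GRing.comm ('X%:M : 'M[{poly F}]_n.+1) A'.
  by rewrite /GRing.comm -!mulmxE scalar_mxC.
have A'k0 : A' ^+ k = 0 by rewrite /A' -rmorphXn /= Ak0 map_mx0.
have XMk j : ('X%:M : 'M[{poly F}]_n.+1) ^+ j = ('X ^+ j)%:M.
  by elim: j => [|j IHj]; rewrite ?expr0 // !exprS IHj -mulmxE -scalar_mxM.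
have /(congr1 determinant) := subrXX_comm k comm_XA.
rewrite A'k0 subr0 XMk det_scalar -mulmxE det_mulmx -exprM => det_eq.
have : char_poly A %| 'X^(k * n.+1).
  by rewrite det_eq /char_poly /char_poly_mx dvdp_mulIl.
by move/(monic_dvd_Xn (char_poly_monic A)) => ->; rewrite size_char_poly.
Qed.

Lemma iter_mulmx (R : comNzRingType) (n k : nat) (A : 'M[R]_n.+1) :
  iter k (mulmx A) 1%:M = A ^+ k.
Proof. by elim: k => [|k IH] //=; rewrite IH exprS mulmxE. Qed.

Definition no_short_cycles (n : nat) (P : znz_pattern n) (m : nat) : Prop :=
  forall k : nat, (2 <= k)%N -> (k <= m.-1)%N -> ~ has_k_cycle P k.

Section PatternPermutations.
Variables (n : nat) (P : znz_pattern n).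

Definition moved (s : 'S_n) : {pred 'I_n} := [pred i | s i != i].

(* s follows P when every moved point i carries the arc (i, s i) of D(P);
   these are the permutations with a possibly nonzero Leibniz term. *)
Definition follows_pattern (s : 'S_n) : Prop := forall i, s i != i -> P i (s i).

Lemma order_fixed (s : 'S_n) (x : 'I_n) : s x = x -> fingraph.order s x = 1%N.
Proof.
move=> sx; apply/anti_leq; rewrite fingraph.order_gt0 andbT -size_orbit.
apply: (@uniq_leq_size _ _ [:: x]); first exact: orbit_uniq.
by move=> y /trajectP[j _ ->]; rewrite iter_fix // inE.
Qed.

Lemma orbit_moved (s : 'S_n) (x : 'I_n) :
  s x != x -> (1 < size (fingraph.orbit s x))%N /\ {subset fingraph.orbit s x <= moved s}.
Proof.
move=> sx; have cyc := cycle_orbit (@perm_inj _ s) x.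
have size_gt1 : (1 < size (fingraph.orbit s x))%N.
  apply: (@uniq_leq_size _ [:: x; s x]); first by rewrite /= inE eq_sym sx.
  move=> y; rewrite !inE => /orP[] /eqP->.
    exact: fingraph.in_orbit.
  exact/fingraph.mem_orbit/fingraph.in_orbit.
split=> // y y_orb; rewrite inE; apply/eqP => /order_fixed.
rewrite (fingraph.order_cycle cyc (orbit_uniq s x) y_orb) => size1.
by rewrite size1 in size_gt1.
Qed.

Lemma orbit_is_cycle (s : 'S_n) (x : 'I_n) :
  follows_pattern s -> s x != x -> is_cycle_of P (fingraph.orbit s x).
Proof.
move=> follows sx; have [_ orb_moved] := orbit_moved sx.
have cyc := cycle_orbit (@perm_inj _ s) x.
have := fingraph.in_orbit s x; rewrite /is_cycle_of.
case: (fingraph.orbit s x) (orbit_uniq s x) cyc orb_moved => [|y t] //.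
move=> uniq_c cyc orb_moved _.
split=> //; apply: (sub_in_cycle (P := mem (y :: t))) cyc; last by apply/allP.
by move=> a b a_orb _ /eqP <-; apply/follows/orb_moved.
Qed.

Lemma moved_card_ge (s : 'S_n) (m : nat) :
  (2 <= m)%N -> no_short_cycles P m -> s != 1%g -> follows_pattern s ->
  (m <= #|moved s|)%N.
Proof.
move=> m_ge2 no_short s_nt follows.
have [x sx] : exists x, s x != x.
  apply/existsP; apply: contraR s_nt => /existsPn fixed.
  by apply/eqP/permP => y; rewrite perm1; apply/eqP/negbNE/fixed.
have [size_gt1 orb_moved] := orbit_moved sx.
have m_le : (m <= size (fingraph.orbit s x))%N.
  rewrite leqNgt; apply/negP => lt_m; apply: (no_short _ size_gt1).
    by move: lt_m; case: (m).
  by exists (fingraph.orbit s x); split=> //; exact: orbit_is_cycle.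
apply: leq_trans m_le _; rewrite cardE.
by apply: uniq_leq_size (orbit_uniq s x) _ => y /orb_moved; rewrite mem_enum.
Qed.

End PatternPermutations.

Section CharPolyExpansion.
Variables (F : fieldType) (n : nat) (A : 'M[F]_n).

Definition char_term (s : 'S_n) : {poly F} := \prod_i char_poly_mx A i (s i).

Lemma char_poly_terms :
  char_poly A =
    \prod_i ('X - (A i i)%:P) + \sum_(s : 'S_n | s != 1%g) (-1) ^+ s * char_term s.
Proof.
rewrite /char_poly /determinant (bigD1 1%g) //= odd_perm1 mul1r.
by congr (_ + _); apply: eq_bigr => i _; rewrite !mxE perm1 eqxx.
Qed.

(* Only the factors at fixed points of s have degree 1. *)
Lemma size_char_term (s : 'S_n) :
  (size (char_term s) <= (n - #|moved s|).+1)%N.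
Proof.
have -> : (n - #|moved s| = #|[pred i | s i == i]|)%N.
  rewrite -[n in (n - _)%N]card_ord -(cardC (moved s)) addKn.
  by apply: eq_card => i; rewrite !inE negbK.
rewrite /char_term -sum1_card (@big_mkcond nat) /=.
apply: (big_ind2 (fun (p : {poly F}) (k : nat) => size p <= k.+1)%N).
- by rewrite size_poly1.
- move=> p k1 q k2 p_le q_le; apply: leq_trans (size_polyMleq _ _) _.
  by rewrite -subn1 -addnS leq_subLR addnA leq_add.
move=> i _; rewrite !mxE eq_sym !inE; case: (s i == i); first by rewrite size_XsubC.
by rewrite sub0r size_polyN size_polyC leq_b1.
Qed.

Lemma char_term_off_pattern (P : znz_pattern n) (s : 'S_n) (j : 'I_n) :
  realization P A -> s j != j -> ~~ P j (s j) -> char_term s = 0.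
Proof.
move=> realA sj notP; rewrite /char_term (bigD1 j) //= !mxE eq_sym (negbTE sj).
have -> : A j (s j) = 0 by apply/eqP; rewrite -[_ == _]negbK realA (negbTE notP).
by rewrite mulr0n sub0r polyC0 oppr0 mul0r.
Qed.

End CharPolyExpansion.

Lemma char_poly_near_diag (F : fieldType) (n m : nat) (P : znz_pattern n)
    (A : 'M[F]_n) :
  realization P A -> (2 <= m)%N -> no_short_cycles P m ->
  exists2 q, char_poly A = \prod_i ('X - (A i i)%:P) + q & (size q <= (n - m).+1)%N.
Proof.
move=> realA m_ge2 no_short; rewrite char_poly_terms; eexists => //.
apply: leq_trans (size_sum _ _ _) _; apply/bigmax_leqP => s s_nt; rewrite size_Msign.
have [follows|] := boolP [forall j, (s j != j) ==> P j (s j)].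
  apply: leq_trans (size_char_term A s) _; rewrite ltnS leq_sub2l //.
  by apply: (moved_card_ge m_ge2 no_short s_nt) => j /(implyP (forallP follows j)).
rewrite negb_forall => /existsP[j]; rewrite negb_imply => /andP[sj notP].
by rewrite (char_term_off_pattern realA sj notP) size_poly0.
Qed.

Lemma prod_diag_split (F : fieldType) (n : nat) (P : znz_pattern n) (A : 'M[F]_n) :
  realization P A ->
  \prod_i ('X - (A i i)%:P) =
    \prod_(a <- [seq A i i | i <- enum [pred i | P i i]]) ('X - a%:P)
    * 'X^(n - num_nz_diag P).
Proof.
move=> realA; rewrite (bigID [pred i | P i i]) /= big_map big_enum /=; congr (_ * _).
rewrite -[n in (n - _)%N]card_ord -(cardC [pred i | P i i]) addKn -prodr_const.
apply: eq_bigr => i notP.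
have /eqP -> : A i i == 0 by rewrite -[_ == _]negbK realA (negbTE notP).
by rewrite subr0.
Qed.

Lemma Xn_add_const (R : nzRingType) (Q q : {poly R}) (m x : nat) :
  (0 < m)%N -> 'X^(m + x) = Q * 'X^x + q -> (size q <= x.+1)%N ->
  Q = 'X^m + (Q`_0)%:P.
Proof.
move=> m_gt0 eqX size_q; apply/polyP => [[|j]].
  by rewrite coefD coefXn coefC eq_sym eqn0Ngt m_gt0 add0r.
have /(congr1 (fun p : {poly R} => p`_(j.+1 + x))) := eqX.
rewrite coefD coefMXn ltnNge leq_addl addnK coefXn eqn_add2r /=.
rewrite [q`_ _]nth_default ?addr0; last by apply: leq_trans size_q _; rewrite ltnS leq_addl.
by rewrite coefD coefXn coefC addr0 => ->.
Qed.

Lemma prod_XsubC_scale (F : fieldType) (d : F) (t : seq F) : d != 0 ->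
  (\prod_(a <- t) ('X - a%:P)) \Po (d%:P * 'X) =
  (d ^+ size t)%:P * \prod_(a <- t) ('X - (a / d)%:P).
Proof.
move=> d0; elim: t => [|a t IH]; first by rewrite !big_nil expr0 mulr1 comp_polyC.
rewrite !big_cons comp_polyM comp_polyB comp_polyX comp_polyC IH.
have -> : d%:P * 'X - a%:P = d%:P * ('X - (a / d)%:P).
  by rewrite mulrBr -polyCM [d * _]mulrC divfK.
by rewrite mulrACA -polyCM -exprS.
Qed.

Lemma Xn_sub1_split (F : fieldType) (s : seq F) (c : F) :
  (0 < size s)%N -> 0 \notin s ->
  \prod_(a <- s) ('X - a%:P) = 'X^(size s) + c%:P ->
  exists s' : seq F, size s' = size s /\
    'X^(size s) - 1 = \prod_(a <- s') ('X - a%:P).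
Proof.
case: s => [|d t] //= _; rewrite inE negb_or eq_sym => /andP[d_nz _] eq_prod.
exists [seq a / d | a <- d :: t]; split; first by rewrite size_map.
rewrite big_map.
have c_eq : c = - d ^+ (size t).+1.
  move: (congr1 (horner^~ d) eq_prod).
  rewrite big_cons hornerM hornerXsubC subrr mul0r hornerD hornerXn hornerC.
  by move/eqP; rewrite eq_sym addrC addr_eq0 => /eqP.
move: (congr1 (fun p => p \Po (d%:P * 'X)) eq_prod).
rewrite /= prod_XsubC_scale // comp_polyD comp_Xn_poly comp_polyC c_eq.
rewrite exprMn polyCN rmorphXn /= -[X in _ = _ - X]mulr1 -mulrBr.
by move/mulfI => -> //; rewrite expf_neq0 // polyC_eq0.
Qed.

Theorem theorem4p4 (F : fieldType) (n : nat) (P : znz_pattern n) :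
  (2 <= num_nz_diag P)%N ->
  (forall k : nat, (2 <= k)%N -> (k <= (num_nz_diag P).-1)%N -> ~ has_k_cycle P k) ->
  potentially_nilpotent F P ->
  exists s : seq F, size s = num_nz_diag P /\
    ('X^(num_nz_diag P) - 1 : {poly F}) = \prod_(a <- s) ('X - a%:P).
Proof.
case: n P => [|n] P m_ge2 no_short [A [realA [k Ak0]]].
  (* the empty pattern has no nonzero diagonal entry *)
  by move: m_ge2; rewrite leqNgt (leq_ltn_trans (max_card _)) ?card_ord.
have charX : char_poly A = 'X^(n.+1).
  by apply: (@char_poly_nilpotent _ _ k); rewrite -iter_mulmx.
have [q char_eq size_q] := char_poly_near_diag realA m_ge2 no_short.
have := prod_diag_split realA; set ds := [seq A i i | i <- _] => diag_eq.
have size_ds : size ds = num_nz_diag P by rewrite size_map -cardE.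
have ds_nz : 0 \notin ds.
  apply/mapP => -[i]; rewrite mem_enum inE -realA => Aii_nz Aii_eq0.
  by rewrite -Aii_eq0 eqxx in Aii_nz.
have m_le : (num_nz_diag P <= n.+1)%N by rewrite -[X in (_ <= X)%N]card_ord max_card.
have X_eq : 'X^(num_nz_diag P + (n.+1 - num_nz_diag P)) =
    \prod_(a <- ds) ('X - a%:P) * 'X^(n.+1 - num_nz_diag P) + q.
  by rewrite subnKC // -charX char_eq diag_eq.
have Q_eq := Xn_add_const (ltnW m_ge2) X_eq size_q.
rewrite -size_ds in m_ge2 Q_eq *.
exact: Xn_sub1_split (ltnW m_ge2) ds_nz Q_eq.
Qed.
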